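(* Let $r,s,t$ be nonzero reals with $r+s+t=0$ and $\lambda=(\lambda_k)_{k\ge0}$ a strictly increasing sequence of positive reals with $\lambda_k\to\infty$. For $x\in\omega$ let $\widehat W_n(x)=\frac{1}{\lambda_n}\sum_{k=0}^n(\lambda_k-\lambda_{k-1})(rx_k+sx_{k-1}+tx_{k-2})$ and $c_0^\lambda(\widehat B)=\{x\in\omega:\lim_{n\to\infty}\widehat W_n(x)=0\}$. Then $c\subsetneq c_0^\lambda(\widehat B)$.
   Context: $\omega$: all complex sequences indexed by $\mathbb{N}=\{0,1,\dots\}$; $c$: convergent sequences. Convention: terms with negative subscript are $0$ ($x_{-1}=x_{-2}=0$, $\lambda_{-1}=0$). *)

From Stdlib Require Import Reals.
From Coquelicot Require Import Coquelicot.
Open Scope R_scope.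

(* Convention: terms with negative subscript are 0. *)
Definition shift1 {A : Type} (z : A) (u : nat -> A) (k : nat) : A :=
  match k with O => z | S k' => u k' end.

(* x_{k-1}, x_{k-2} with x_{-1} = x_{-2} = 0 *)
Definition xprev (x : nat -> C) : nat -> C := shift1 (RtoC 0) x.
Definition xprev2 (x : nat -> C) : nat -> C := xprev (xprev x).
Definition lprev (lam : nat -> R) : nat -> R := shift1 0 lam.

Definition What (r s t : R) (lam : nat -> R) (x : nat -> C) (n : nat) : C :=
  Cmult (RtoC (/ lam n))
    (sum_n (fun k => Cmult (RtoC (lam k - lprev lam k))
              (Cplus (Cplus (Cmult (RtoC r) (x k)) (Cmult (RtoC s) (xprev x k)))
                     (Cmult (RtoC t) (xprev2 x k)))) n).

Definition conv_seq (x : nat -> C) : Prop :=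
  exists l : C, filterlim x eventually (locally l).

Definition c0_lam_B (r s t : R) (lam : nat -> R) (x : nat -> C) : Prop :=
  filterlim (What r s t lam x) eventually (locally (RtoC 0)).

(* Writing B^x_k = r x_k + s x_{k-1} + t x_{k-2}, the transform W^ is the weighted mean of B^x with
   weights lambda_k - lambda_{k-1}, and such means preserve null sequences (Toeplitz).  Since
   r + s + t = 0, B^x_k = r (x_k - x_{k-1}) - t (x_{k-1} - x_{k-2}) for k >= 2, so B^x is null as soon
   as the increments of x are.  This covers every convergent x, and also x_k = ln (k + 1), whose
   increments are at most 1/(k+1) but which diverges. *)

From Stdlib Require Import Reals Lra Lia.
From Coquelicot Require Import Coquelicot.
Open Scope R_scope.

Lemma filterlim_C_eps (u : nat -> C) (l : C) :
  filterlim u eventually (locally l) <->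
  forall eps, 0 < eps -> exists N, forall n, (N <= n)%nat -> Cmod (u n - l)%C < eps.
Proof.
  split.
  - intros Hu eps Heps.
    apply (Hu _ (locally_le_locally_norm l _
             (locally_norm_ball_norm (V := C_NormedModule) l (mkposreal eps Heps)))).
  - intros Hu.
    apply (filterlim_filter_le_2 _ (locally_norm_le_locally (V := C_NormedModule) l)).
    intros P [eps HP].
    destruct (Hu eps (cond_pos eps)) as [N HN].
    exists N; intros n Hn; apply HP, HN, Hn.
Qed.

Lemma filterlim_C0_eps (u : nat -> C) :
  filterlim u eventually (locally (RtoC 0)) <->
  forall eps, 0 < eps -> exists N, forall n, (N <= n)%nat -> Cmod (u n) < eps.
Proof.
  rewrite filterlim_C_eps.
  assert (E : forall n, (u n - RtoC 0)%C = u n) by (intros; ring).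
  split; intros H eps Heps; destruct (H eps Heps) as [N HN];
    exists N; intros n Hn; [rewrite <- E | rewrite E]; auto.
Qed.

Section WeightedMean.

Variable lam : nat -> R.
Hypothesis lam_pos : forall k, 0 < lam k.
Hypothesis lam_incr : forall k, lam k < lam (S k).
Hypothesis lam_unbounded : is_lim_seq lam p_infty.

Definition weighted_mean (Y : nat -> C) (n : nat) : C :=
  Cmult (RtoC (/ lam n))
    (sum_n (fun k => Cmult (RtoC (lam k - lprev lam k)) (Y k)) n).

Lemma weighted_sum_tail_bound (Y : nat -> C) (N : nat) (e : R) :
  (forall k, (N <= k)%nat -> Cmod (Y k) < e) ->
  forall n, (N <= n)%nat ->
  Cmod (sum_n (fun k => Cmult (RtoC (lam k - lprev lam k)) (Y k)) n)
    <= Cmod (sum_n (fun k => Cmult (RtoC (lam k - lprev lam k)) (Y k)) N) + e * lam n.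
Proof.
  intros HY n Hn.
  induction Hn as [|m Hm IH].
  - pose proof (lam_pos N).
    assert (0 <= e) by (eapply Rle_trans; [apply Cmod_ge_0 | left; apply (HY N (le_n N))]).
    assert (0 <= e * lam N) by (apply Rmult_le_pos; lra).
    lra.
  - rewrite sum_Sn.
    eapply Rle_trans; [apply Cmod_triangle|].
    simpl (lprev lam (S m)).
    rewrite Cmod_mult, Cmod_R, Rabs_pos_eq by (pose proof (lam_incr m); lra).
    assert (HYm : Cmod (Y (S m)) < e) by (apply HY; lia).
    pose proof (lam_incr m).
    assert ((lam (S m) - lam m) * Cmod (Y (S m)) <= (lam (S m) - lam m) * e)
      by (apply Rmult_le_compat_l; lra).
    lra.
Qed.

Lemma weighted_mean_null (Y : nat -> C) :
  filterlim Y eventually (locally (RtoC 0)) ->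
  filterlim (weighted_mean Y) eventually (locally (RtoC 0)).
Proof.
  rewrite !filterlim_C0_eps.
  intros HY eps Heps.
  destruct (HY (eps / 2)) as [N HN]; [lra|].
  set (S0 := Cmod (sum_n (fun k => Cmult (RtoC (lam k - lprev lam k)) (Y k)) N)).
  assert (HS0 : 0 <= S0) by apply Cmod_ge_0.
  apply is_lim_seq_spec in lam_unbounded.
  destruct (lam_unbounded (2 * S0 / eps)) as [M HM].
  exists (max N M); intros n Hn.
  pose proof (weighted_sum_tail_bound Y N (eps / 2) HN n ltac:(lia)) as Hsum.
  specialize (HM n ltac:(lia)).
  pose proof (lam_pos n).
  unfold weighted_mean.
  rewrite Cmod_mult, Cmod_R, Rabs_pos_eq by (left; apply Rinv_0_lt_compat; lra).
  assert (2 * S0 < eps * lam n).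
  { apply (Rmult_lt_compat_l eps) in HM; [|lra].
    replace (eps * (2 * S0 / eps)) with (2 * S0) in HM by (field; lra). lra. }
  apply (Rmult_lt_reg_l (lam n)); [lra|].
  rewrite <- Rmult_assoc, Rinv_r by lra.
  fold S0 in Hsum. lra.
Qed.

End WeightedMean.

Definition Bhat (r s t : R) (x : nat -> C) (k : nat) : C :=
  Cplus (Cplus (Cmult (RtoC r) (x k)) (Cmult (RtoC s) (xprev x k)))
        (Cmult (RtoC t) (xprev2 x k)).

Lemma What_weighted_mean (r s t : R) (lam : nat -> R) (x : nat -> C) :
  What r s t lam x = weighted_mean lam (Bhat r s t x).
Proof. reflexivity. Qed.

Definition increments (x : nat -> C) (k : nat) : C := (x (S k) - x k)%C.

Lemma Bhat_increments (r s t : R) (x : nat -> C) (m : nat) :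
  r + s + t = 0 ->
  Bhat r s t x (S (S m)) = (RtoC r * increments x (S m) - RtoC t * increments x m)%C.
Proof.
  intros hrst.
  assert (Es : RtoC s = (- RtoC r - RtoC t)%C)
    by (apply injective_projections; simpl; lra).
  unfold Bhat, increments, xprev2, xprev; simpl shift1.
  rewrite Es; ring.
Qed.

Lemma Bhat_null_of_increments_null (r s t : R) (x : nat -> C) :
  r + s + t = 0 ->
  filterlim (increments x) eventually (locally (RtoC 0)) ->
  filterlim (Bhat r s t x) eventually (locally (RtoC 0)).
Proof.
  rewrite !filterlim_C0_eps.
  intros hrst Hd eps Heps.
  set (K := Rabs r + Rabs t + 1).
  assert (HK : 0 < K) by (unfold K; pose proof (Rabs_pos r); pose proof (Rabs_pos t); lra).
  destruct (Hd (eps / K)) as [N HN]; [apply Rdiv_lt_0_compat; lra|].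
  exists (N + 2)%nat; intros k Hk.
  destruct k as [|[|m]]; try lia.
  rewrite Bhat_increments by exact hrst.
  eapply Rle_lt_trans; [apply Cmod_triangle|].
  rewrite Cmod_opp, !Cmod_mult, !Cmod_R.
  assert (H1 := HN (S m) ltac:(lia)).
  assert (H0 := HN m ltac:(lia)).
  assert (Rabs r * Cmod (increments x (S m)) <= Rabs r * (eps / K))
    by (apply Rmult_le_compat_l; [apply Rabs_pos | lra]).
  assert (Rabs t * Cmod (increments x m) <= Rabs t * (eps / K))
    by (apply Rmult_le_compat_l; [apply Rabs_pos | lra]).
  assert (Rabs r * (eps / K) + Rabs t * (eps / K) < eps).
  { replace (Rabs r * (eps / K) + Rabs t * (eps / K)) with (eps - eps / K)
      by (unfold K; field; pose proof (Rabs_pos r); pose proof (Rabs_pos t); lra).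
    assert (0 < eps / K) by (apply Rdiv_lt_0_compat; lra). lra. }
  lra.
Qed.

Lemma increments_null_of_conv (x : nat -> C) :
  conv_seq x -> filterlim (increments x) eventually (locally (RtoC 0)).
Proof.
  intros [l Hl].
  rewrite filterlim_C_eps in Hl.
  apply filterlim_C0_eps; intros eps Heps.
  destruct (Hl (eps / 2)) as [N HN]; [lra|].
  exists N; intros n Hn.
  replace (increments x n) with ((x (S n) - l) - (x n - l))%C by (unfold increments; ring).
  eapply Rle_lt_trans; [apply Cmod_triangle|].
  rewrite Cmod_opp.
  assert (Cmod (x (S n) - l)%C < eps / 2) by (apply HN; lia).
  assert (Cmod (x n - l)%C < eps / 2) by (apply HN; lia).
  lra.
Qed.

Definition log_seq (k : nat) : C := RtoC (ln (INR k + 1)).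

Lemma ln_succ_sub_bound (a : R) : 0 < a -> 0 <= ln (a + 1) - ln a <= / a.
Proof.
  intros Ha; split.
  - assert (ln a <= ln (a + 1)) by (apply ln_le; lra). lra.
  - rewrite <- ln_div by lra.
    replace ((a + 1) / a) with (1 + / a) by (field; lra).
    rewrite <- (ln_exp (/ a)) at 2.
    apply ln_le; [pose proof (Rinv_0_lt_compat a Ha); lra | apply exp_ineq1_le].
Qed.

Lemma log_seq_increments_null :
  filterlim (increments log_seq) eventually (locally (RtoC 0)).
Proof.
  apply filterlim_C0_eps; intros eps Heps.
  destruct (INR_unbounded (/ eps)) as [N HN].
  exists N; intros n Hn.
  unfold increments, log_seq.
  rewrite <- RtoC_minus, Cmod_R, S_INR.
  pose proof (pos_INR n).
  assert (HNn : INR N <= INR n) by (apply le_INR; lia).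
  destruct (ln_succ_sub_bound (INR n + 1) ltac:(lra)) as [Hlo Hhi].
  rewrite Rabs_pos_eq by lra.
  apply (Rle_lt_trans _ _ _ Hhi).
  rewrite <- (Rinv_inv eps).
  apply Rinv_lt_contravar; [apply Rmult_lt_0_compat; [apply Rinv_0_lt_compat|]|]; lra.
Qed.

(* ln (2N + 2) - ln (N + 1) = ln 2 > 1/2 forbids the Cauchy property at 1/4. *)
Lemma log_seq_not_conv : ~ conv_seq log_seq.
Proof.
  intros [l Hl].
  rewrite filterlim_C_eps in Hl.
  destruct (Hl (1 / 4)) as [N HN]; [lra|].
  assert (H2N := HN (2 * N + 1)%nat ltac:(lia)).
  assert (HN0 := HN N ltac:(lia)).
  pose proof (pos_INR N).
  assert (Hd : (log_seq (2 * N + 1) - log_seq N)%C = RtoC (ln 2)).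
  { unfold log_seq.
    replace (INR (2 * N + 1) + 1) with (2 * (INR N + 1))
      by (rewrite plus_INR, mult_INR; simpl; lra).
    rewrite ln_mult by lra.
    apply injective_projections; simpl; lra. }
  assert (Hc : Cmod (RtoC (ln 2)) < 1 / 2).
  { rewrite <- Hd.
    replace (log_seq (2 * N + 1) - log_seq N)%C
      with ((log_seq (2 * N + 1) - l) - (log_seq N - l))%C by ring.
    eapply Rle_lt_trans; [apply Cmod_triangle|].
    rewrite Cmod_opp. lra. }
  pose proof ln_lt_2.
  rewrite Cmod_R, Rabs_pos_eq in Hc by lra.
  lra.
Qed.

Theorem theorem5 (r s t : R) (lam : nat -> R)
  (hr : r <> 0) (hs : s <> 0) (ht : t <> 0) (hrst : r + s + t = 0)
  (hpos : forall k, 0 < lam k) (hinc : forall k, lam k < lam (S k))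
  (hinf : is_lim_seq lam p_infty) :
  (forall x : nat -> C, conv_seq x -> c0_lam_B r s t lam x) /\
  (exists x : nat -> C, c0_lam_B r s t lam x /\ ~ conv_seq x).
Proof.
  assert (Hc0 : forall x, filterlim (increments x) eventually (locally (RtoC 0)) ->
                c0_lam_B r s t lam x).
  { intros x Hx.
    unfold c0_lam_B; rewrite What_weighted_mean.
    apply weighted_mean_null; auto.
    now apply Bhat_null_of_increments_null. }
  split.
  - intros x Hx. apply Hc0, increments_null_of_conv, Hx.
  - exists log_seq. split.
    + apply Hc0, log_seq_increments_null.
    + exact log_seq_not_conv.
Qed.
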